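(* Let $n\ge2$ and let $G$ be an induced subgraph of $Q_n$ with exactly $2^{n-1}$ vertices such that for every direction $i\in[n]$, $G$ contains an edge in direction $i$. Then $\Delta(G)>\tfrac12\log_2 n-\tfrac12\log_2\log_2 n+\tfrac12$.
   Context: $Q_n$ is the $n$-dimensional hypercube graph on $\{0,1\}^n$; an edge $\{x,y\}$ of $Q_n$ is in direction $i$ if $x$ and $y$ differ exactly in coordinate $i$. $\Delta(G)$ is the maximum degree of $G$. *)

From mathcomp Require Import all_boot.
From Stdlib Require Import Reals.
Set Implicit Arguments. Unset Strict Implicit. Unset Printing Implicit Defensive.

Definition cube_vertex (n : nat) := {ffun 'I_n -> bool}.

Definition diff_coords n (x y : cube_vertex n) : {set 'I_n} :=
  [set i | x i != y i].

Definition cube_adj n (x y : cube_vertex n) : bool :=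
  #|diff_coords x y| == 1%N.

Definition cube_edge_dir n (i : 'I_n) (x y : cube_vertex n) : bool :=
  diff_coords x y == [set i].

Definition ind_deg n (S : {set cube_vertex n}) (x : cube_vertex n) : nat :=
  #|[set y in S | cube_adj x y]|.

Definition ind_maxdeg n (S : {set cube_vertex n}) : nat :=
  \max_(x in S) ind_deg S x.

Definition log2 (x : R) : R := (ln x / ln 2)%R.

From mathcomp Require Import all_boot zify.
Set Implicit Arguments. Unset Strict Implicit. Unset Printing Implicit Defensive.

(* Let Δ be the maximum degree of Q_n[S] and fix a direction i carrying an edge of S. The set
   W of vertices y with (y ∈ S) = (flip_i y ∈ S) is closed under flip_i, and |S| = 2^(n-1)
   forces it to meet S and its complement in sets U and T of the same size k >= 1.  For y ∈ U,
   at most 2Δ - 1 directions j put flip_j y or flip_j (flip_i y) into S; in every other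
   direction flip_j y lies in T.  So Q_n[W] has at least k (n + 2 - 2Δ) edges, and the
   edge-isoperimetric inequality e(W) <= |W| log2 |W| / 2 gives 2^(n+2) <= 2k 4^Δ.  Summing
   over the n directions, with Σ_i k_i = Σ_(y ∈ S) deg y <= Δ 2^(n-1), yields 4n <= 4^Δ Δ,
   and taking logarithms gives the bound. *)

Lemma ffact_expn_le a b i : b <= a -> b ^_ i * a ^ i <= a ^_ i * b ^ i.
Proof.
move=> le_ba; elim: i => [|i IHi]; first by rewrite !ffactn0.
rewrite !ffactnSr !expnS.
have step : (b - i) * a <= (a - i) * b by nia.
by have := leq_mul IHi step; nia.
Qed.

Lemma bin_expn_le a b i : b <= a -> 'C(b, i) * a ^ i <= 'C(a, i) * b ^ i.
Proof.
move=> le_ba; rewrite -(leq_pmul2r (fact_gt0 i)).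
by rewrite mulnAC bin_ffact [X in _ <= X]mulnAC bin_ffact ffact_expn_le.
Qed.

Lemma expn2_mul_le a b : b <= a -> 2 ^ b * a ^ a <= (a + b) ^ a.
Proof.
move=> le_ba; rewrite -[2]/(1 + 1) !expnDn big_distrl /=.
rewrite (big_ord_widen a.+1 (fun i => 'C(b, i) * (1 ^ (b - i) * 1 ^ i) * a ^ a)) //.
rewrite big_mkcond; apply: leq_sum => i _; case: ifP => // _.
have -> : a ^ a = a ^ (a - i) * a ^ i by rewrite -expnD subnK // -ltnS.
by rewrite !exp1n !muln1 mulnCA [X in _ <= X]mulnCA leq_mul2l bin_expn_le ?orbT.
Qed.

Lemma leq_self_expnD a b : a ^ a * b ^ b * 4 ^ minn a b <= (a + b) ^ (a + b).
Proof.
wlog le_ba : a b / b <= a.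
  move=> hwlog; case/orP: (leq_total b a) => [|le_ab]; first exact: hwlog.
  by have := hwlog b a le_ab; rewrite [b ^ b * _]mulnC minnC addnC.
have two_a := expn2_mul_le le_ba.
have two_b : 2 ^ b * b ^ b <= (a + b) ^ b.
  by rewrite -expnMn; case: b {two_a} le_ba => // b le_ba; rewrite leq_exp2r //; lia.
rewrite (minn_idPr le_ba) expnD -[4]/(2 * 2) expnMn.
by apply: leq_trans (leq_mul two_a two_b); nia.
Qed.

Lemma sum_nat_bool (T : finType) (Q P : pred T) :
  \sum_(z | Q z) (P z : nat) = #|[set z | Q z & P z]|.
Proof. by rewrite -big_mkcondr -sum1_card; apply: eq_bigl => z; rewrite inE. Qed.

Section Hypercube.
Variable n : nat.
Implicit Types (x y z w : cube_vertex n) (i j : 'I_n) (U V W : {set cube_vertex n}).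

Definition flip j x : cube_vertex n := [ffun k => (k == j) (+) x k].

Lemma flipK j : involutive (flip j).
Proof. by move=> x; apply/ffunP=> k; rewrite !ffunE addKb. Qed.

Lemma flipC i j x : flip i (flip j x) = flip j (flip i x).
Proof. by apply/ffunP=> k; rewrite !ffunE addbCA. Qed.

Lemma flip_inj x : injective (flip^~ x).
Proof.
move=> i j /ffunP /(_ i); rewrite !ffunE eqxx.
by case: eqP => // _; case: (x i).
Qed.

Lemma diff_coords_flip j x : diff_coords x (flip j x) = [set j].
Proof. by apply/setP=> k; rewrite !inE ffunE; case: (k == j); case: (x k). Qed.

Lemma diff_coords1 j x y : diff_coords x y = [set j] -> y = flip j x.
Proof.
move/setP=> eq_diff; apply/ffunP=> k; rewrite ffunE.
by have := eq_diff k; rewrite !inE; case: (k == j); case: (x k); case: (y k).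
Qed.

Lemma cube_edge_dir_flip i x y : cube_edge_dir i x y -> y = flip i x.
Proof. by move/eqP; apply: diff_coords1. Qed.

Lemma cube_adjP x y : reflect (exists j, y = flip j x) (cube_adj x y).
Proof.
apply: (iffP cards1P) => [[j /diff_coords1]|[j ->]]; first by exists j.
by exists j; rewrite diff_coords_flip.
Qed.

Lemma cube_adjC x y : cube_adj x y = cube_adj y x.
Proof.
by rewrite /cube_adj (_ : diff_coords x y = diff_coords y x) //; apply/setP=> k; rewrite !inE eq_sym.
Qed.

Lemma cube_adj_flip j x : cube_adj x (flip j x).
Proof. by apply/cube_adjP; exists j. Qed.

Lemma cube_adj_irr x : ~~ cube_adj x x.
Proof.
apply/cube_adjP=> [[j /ffunP /(_ j)]]; rewrite ffunE eqxx.
by case: (x j).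
Qed.

Lemma cube_adj_neq_flip j w y : cube_adj w y -> y j != w j -> y = flip j w.
Proof. by case/cube_adjP=> k ->; rewrite ffunE; case: (j =P k) => [->|_] //=; rewrite eqxx. Qed.

Lemma card_nbrs V y : #|[set z in V | cube_adj y z]| = #|[set j | flip j y \in V]|.
Proof.
rewrite -(card_imset _ (@flip_inj y)); apply: eq_card => z; rewrite inE.
apply/andP/imsetP => [[Vz /cube_adjP[j eq_z]]|[j]]; first by exists j; rewrite // inE -eq_z.
by rewrite inE => Vfy ->; rewrite Vfy cube_adj_flip.
Qed.

Definition adj_pairs U V := \sum_(w in U) \sum_(z in V) (cube_adj w z : nat).

Lemma adj_pairsC U V : adj_pairs U V = adj_pairs V U.
Proof.
rewrite /adj_pairs exchange_big; apply: eq_bigr => w _; apply: eq_bigr => z _.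
by rewrite cube_adjC.
Qed.

Lemma adj_pairs_setID B W :
  adj_pairs W W = adj_pairs (W :&: B) (W :&: B) + adj_pairs (W :\: B) (W :\: B)
                  + 2 * adj_pairs (W :&: B) (W :\: B).
Proof.
have splitl V : adj_pairs W V = adj_pairs (W :&: B) V + adj_pairs (W :\: B) V.
  by rewrite /adj_pairs (big_setID B).
have splitr U : adj_pairs U W = adj_pairs U (W :&: B) + adj_pairs U (W :\: B).
  by rewrite /adj_pairs -big_split; apply: eq_bigr => w _; rewrite (big_setID B).
rewrite splitl !splitr [adj_pairs (W :\: B) (W :&: B)]adj_pairsC; lia.
Qed.

Lemma adj_pairs_across j c U V :
  {in U, forall w, w j = c} -> {in V, forall z, z j != c} -> adj_pairs U V <= #|U|.
Proof.
move=> U_c V_nc; rewrite -sum1_card; apply: leq_sum => w Uw.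
rewrite sum_nat_bool -(cards1 (flip j w)); apply: subset_leq_card.
apply/subsetP=> z; rewrite !inE => /andP[Vz adj_wz].
by rewrite (@cube_adj_neq_flip j w z) // (U_c w Uw) V_nc.
Qed.

Lemma card_le_adj_pairs i U : {in U, forall w, flip i w \in U} -> #|U| <= adj_pairs U U.
Proof.
move=> U_flip; rewrite -sum1_card; apply: leq_sum => w Uw.
by rewrite sum_nat_bool; apply/card_gt0P; exists (flip i w); rewrite inE U_flip ?cube_adj_flip.
Qed.

(* The edge-isoperimetric inequality e(Q_n[W]) <= |W| log2 |W| / 2, by induction after
   splitting W along a coordinate in which two of its vertices differ. *)
Lemma edge_isoperimetric W : 2 ^ adj_pairs W W <= #|W| ^ #|W|.
Proof.
have [m] := ubnP #|W|; elim: m W => // m IHm W ltWm.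
case: (leqP #|W| 1) => [/card_le1P W_le1|/card_gt1P[w1 [w2 [Ww1 Ww2 neq12]]]].
  have -> : adj_pairs W W = 0.
    apply: big1 => w Ww; apply: big1 => z Wz.
    by move/W_le1: Ww => /(_ z); rewrite Wz => /esym/eqP ->; rewrite (negbTE (cube_adj_irr w)).
  by rewrite expn_gt0; case: #|W|.
have [j neq12_j] : exists j, w1 j != w2 j.
  apply/existsP; apply: contraR neq12 => /existsPn eq12.
  by apply/eqP/ffunP=> k; apply/eqP/negPn/eq12.
set B : {set cube_vertex n} := [set w : cube_vertex n | w j == w1 j].
have W0w1 : w1 \in W :&: B by rewrite !inE Ww1 eqxx.
have W1w2 : w2 \in W :\: B by rewrite !inE Ww2 andbT eq_sym.
have cardW := cardsID B W.
have pos0 : 0 < #|W :&: B| by apply/card_gt0P; exists w1.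
have pos1 : 0 < #|W :\: B| by apply/card_gt0P; exists w2.
have IH0 : 2 ^ adj_pairs (W :&: B) (W :&: B) <= #|W :&: B| ^ #|W :&: B|.
  by apply: IHm; lia.
have IH1 : 2 ^ adj_pairs (W :\: B) (W :\: B) <= #|W :\: B| ^ #|W :\: B|.
  by apply: IHm; lia.
have cross0 : adj_pairs (W :&: B) (W :\: B) <= #|W :&: B|.
  apply: (adj_pairs_across (j := j) (c := w1 j)) => w; rewrite !inE.
    by case/andP=> _ /eqP.
  by case/andP.
have cross1 : adj_pairs (W :&: B) (W :\: B) <= #|W :\: B|.
  rewrite adj_pairsC; apply: (adj_pairs_across (j := j) (c := ~~ w1 j)) => w; rewrite !inE.
    by case/andP=> /negbTE; case: (w j); case: (w1 j).
  by case/andP=> _ /eqP ->; case: (w1 j).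
rewrite (adj_pairs_setID B) -cardW; apply: leq_trans (leq_self_expnD _ _).
rewrite expnD [2 ^ (_ + _)]expnD expnM; apply: leq_mul; first exact: leq_mul.
by rewrite leq_exp2l // leq_min cross0 cross1.
Qed.

Definition dir_ends V i := [set y in V | flip i y \in V].

Lemma card_dir_ends_setC V i : #|~: V| = #|V| -> #|dir_ends (~: V) i| = #|dir_ends V i|.
Proof.
move=> card_VC; set F : {set cube_vertex n} := [set y | flip i y \in V].
have -> : dir_ends V i = V :&: F by apply/setP=> y; rewrite !inE.
have -> : dir_ends (~: V) i = ~: V :\: F by apply/setP=> y; rewrite !inE andbC.
have swap : #|~: V :&: F| = #|V :\: F|.
  rewrite -(card_preimset _ (can_inj (flipK i))).
  by apply: eq_card => y; rewrite !inE flipK andbC.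
by have := cardsID F V; have := cardsID F (~: V); lia.
Qed.

Lemma sum_card_dir_ends V : \sum_i #|dir_ends V i| = \sum_(y in V) ind_deg V y.
Proof.
under eq_bigr do rewrite -sum_nat_bool.
rewrite exchange_big; apply: eq_bigr => y _.
by rewrite sum_nat_bool /ind_deg card_nbrs; apply: eq_card => j; rewrite !inE.
Qed.

Section HalfCube.
Variables (S : {set cube_vertex n}) (d : nat).
Hypothesis card_SC : #|~: S| = #|S|.
Hypothesis deg_le : {in S, forall y, ind_deg S y <= d}.

Lemma card_nbrs_dir_ends_setC i y : y \in dir_ends S i ->
  n.+1 <= 2 * d + #|[set z in dir_ends (~: S) i | cube_adj y z]|.
Proof.
rewrite inE => /andP[Sy Sfy]; rewrite card_nbrs.
set N1 := [set j | flip j y \in S]; set N2 := [set j | flip j (flip i y) \in S].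
have card_N1 : #|N1| <= d by rewrite -card_nbrs; apply: deg_le.
have card_N2 : #|N2| <= d by rewrite -card_nbrs; apply: deg_le.
have N12i : 0 < #|N1 :&: N2| by apply/card_gt0P; exists i; rewrite !inE Sfy flipK.
have sub : ~: (N1 :|: N2) \subset [set j | flip j y \in dir_ends (~: S) i].
  apply/subsetP=> j; rewrite !inE negb_or => /andP[notN1 notN2].
  by rewrite notN1 flipC.
have := subset_leq_card sub; have := cardsUI N1 N2; have := cardsC (N1 :|: N2).
rewrite card_ord; lia.
Qed.

Lemma dir_ends_bound i : dir_ends S i != set0 -> 2 ^ n.+2 <= 2 * #|dir_ends S i| * 4 ^ d.
Proof.
move=> /set0Pn ne_U; set U := dir_ends S i; set T := dir_ends (~: S) i.
set W : {set cube_vertex n} := [set y | (y \in S) == (flip i y \in S)].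
have WS : W :&: S = U.
  by apply/setP=> y; rewrite !inE; case: (y \in S); case: (flip i y \in S).
have WT : W :\: S = T.
  by apply/setP=> y; rewrite !inE; case: (y \in S); case: (flip i y \in S).
have card_T : #|T| = #|U| := card_dir_ends_setC i card_SC.
have card_W : #|W| = #|U| + #|T| by rewrite -WS -WT cardsID.
have pos_U : 0 < #|U| by apply/card_gt0P.
have adj_U : #|U| <= adj_pairs U U.
  by apply: (card_le_adj_pairs (i := i)) => y; rewrite !inE flipK andbC.
have adj_T : #|T| <= adj_pairs T T.
  by apply: (card_le_adj_pairs (i := i)) => y; rewrite !inE flipK andbC.
have adj_UT : #|U| * n.+1 <= 2 * d * #|U| + adj_pairs U T.
  rewrite -sum_nat_const mulnC -sum_nat_const -big_split /=.
  by apply: leq_sum => y Uy; rewrite sum_nat_bool; apply: card_nbrs_dir_ends_setC.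
have iso := edge_isoperimetric W.
have : (2 ^ n.+2) ^ (2 * #|U|) <= (2 * #|U| * 4 ^ d) ^ (2 * #|U|).
  rewrite expnMn -expnM -[4]/(2 ^ 2) -!expnM.
  apply: leq_trans (_ : 2 ^ (adj_pairs W W + 2 * d * (2 * #|U|)) <= _).
    by rewrite leq_exp2l // (adj_pairs_setID S) WS WT; nia.
  rewrite expnD; apply: leq_mul; first by rewrite (_ : 2 * #|U| = #|W|) //; lia.
  by rewrite leq_exp2l //; nia.
by rewrite leq_exp2r // muln_gt0.
Qed.

Lemma exp_deg_bound : (forall i, dir_ends S i != set0) -> 4 * n <= 4 ^ d * d.
Proof.
move=> ne_dir.
have card_S : #|S| + #|S| = 2 ^ n.
  by rewrite -{2}card_SC cardsC card_ffun card_bool card_ord.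
have pos_S : 0 < #|S|.
  have : 0 < 2 ^ n by rewrite expn_gt0.
  lia.
have sum_deg : \sum_(y in S) ind_deg S y <= #|S| * d.
  by rewrite -sum_nat_const; apply: leq_sum.
have dir_sum : n * 2 ^ n.+2 <= 2 * (\sum_(y in S) ind_deg S y) * 4 ^ d.
  rewrite -sum_card_dir_ends big_distrr big_distrl -{1}(card_ord n) -sum_nat_const /=.
  by apply: leq_sum => i _; apply: dir_ends_bound.
have := leq_mul (leq_mul (leqnn 2) sum_deg) (leqnn (4 ^ d)).
move: dir_sum; rewrite -(leq_pmul2r pos_S) !expnS -card_S; nia.
Qed.

End HalfCube.

End Hypercube.

From Stdlib Require Import Reals Lra.

(* From here on [^] on [nat] denotes [Nat.pow] rather than [expn]. *)
Lemma expn_pow a k : expn a k = Nat.pow a k.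
Proof. by elim: k => // k IHk; rewrite expnS IHk. Qed.

Section Log2.
Local Open Scope R_scope.

Lemma ln2_gt0 : 0 < ln 2.
Proof. by rewrite -ln_1; apply: ln_increasing; lra. Qed.

Lemma log2_lt x y : 0 < x -> x < y -> log2 x < log2 y.
Proof.
move=> x_gt0 lt_xy; apply: Rmult_lt_compat_r; last exact: ln_increasing.
by apply: Rinv_0_lt_compat; apply: ln2_gt0.
Qed.

Lemma log2_le x y : 0 < x -> x <= y -> log2 x <= log2 y.
Proof.
move=> x_gt0 /Rle_lt_or_eq_dec[lt_xy|->]; last exact: Rle_refl.
by apply: Rlt_le; apply: log2_lt.
Qed.

Lemma log2_mult x y : 0 < x -> 0 < y -> log2 (x * y) = log2 x + log2 y.
Proof. by move=> x_gt0 y_gt0; rewrite /log2 ln_mult //; lra. Qed.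

Lemma log2_1 : log2 1 = 0.
Proof. by rewrite /log2 ln_1; lra. Qed.

Lemma log2_2 : log2 2 = 1.
Proof. by rewrite /log2; field; apply: Rgt_not_eq; apply: ln2_gt0. Qed.

Lemma log2_pow x k : 0 < x -> log2 (x ^ k) = INR k * log2 x.
Proof. by move=> x_gt0; rewrite /log2 ln_pow //; lra. Qed.

Lemma log2_4 : log2 4 = 2.
Proof. by rewrite (_ : 4 = 2 * 2); [rewrite log2_mult ?log2_2; lra | lra]. Qed.

Lemma half_log2_bound (L D : R) :
  1 <= L -> 0 < D -> L <= 2 * D - 2 + log2 D -> D > / 2 * L - / 2 * log2 L + / 2.
Proof.
move=> L_ge1 D_gt0 L_le.
case: (Rlt_le_dec D (2 * L)) => [lt_D|le_D].
  have : log2 D < 1 + log2 L.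
    by rewrite -log2_2 -log2_mult; [apply: log2_lt | | ]; lra.
  lra.
have : 0 <= log2 L by rewrite -log2_1; apply: log2_le; lra.
lra.
Qed.

Lemma exp_deg_bound_log2 (n d : nat) : (2 <= n)%nat -> 4 * INR n <= 4 ^ d * INR d ->
  INR d > / 2 * log2 (INR n) - / 2 * log2 (log2 (INR n)) + / 2.
Proof.
move=> n_ge2 bound.
have n_ge2R : 2 <= INR n by apply: (le_INR 2); apply/leP.
have pow_gt0 : 0 < 4 ^ d by apply: pow_lt; lra.
have d_gt0 : 0 < INR d.
  by case: (Rle_lt_or_eq_dec _ _ (pos_INR d)) => // d0; rewrite -d0 in bound; nra.
apply: half_log2_bound => //.
  by rewrite -log2_2; apply: log2_le; lra.
have pos_4n : 0 < 4 * INR n by lra.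
have := log2_le pos_4n bound.
by rewrite (@log2_mult 4) ?(@log2_mult (4 ^ d)) ?log2_pow ?log2_4; lra.
Qed.

End Log2.

Theorem lemma3p5 (n : nat) (S : {set cube_vertex n}) :
  (2 <= n)%N ->
  #|S| = (2 ^ n.-1)%N ->
  (forall i : 'I_n, exists x y, [/\ x \in S, y \in S & cube_edge_dir i x y]) ->
  (INR (ind_maxdeg S) >
     / 2 * log2 (INR n) - / 2 * log2 (log2 (INR n)) + / 2)%R.
Proof.
move=> n_ge2 card_S dir_edge.
apply: exp_deg_bound_log2 => //.
have card_SC : #|~: S| = #|S|.
  have two_n : expn 2 n = 2 * expn 2 n.-1 by rewrite -expnS prednK // ltnW.
  by have := cardsC S; rewrite card_ffun card_bool card_ord card_S -!expn_pow two_n; lia.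
have deg_le : {in S, forall y, ind_deg S y <= ind_maxdeg S}.
  by move=> y Sy; apply: leq_bigmax_cond.
have ne_dir i : dir_ends S i != set0.
  have [x [y [Sx Sy /cube_edge_dir_flip eq_y]]] := dir_edge i.
  by apply/set0Pn; exists x; rewrite inE Sx -eq_y.
have /leP/le_INR := exp_deg_bound card_SC deg_le ne_dir.
by rewrite !mult_INR expn_pow pow_INR (_ : INR 4 = 4%R) // INR_IZR_INZ.
Qed.
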